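(* Let $k\ge 100$ be an integer and let the roots of $f_k(X)=X^k-X^{k-1}-\cdots-X-1$ be $\alpha_1,\ldots,\alpha_{k-1},\alpha_k$, where $\alpha_k$ is the unique real root greater than $1$. Then for all distinct $i,j\in\{1,\ldots,k-1\}$, $$\frac{k^2}{13000\,e^3}<|\alpha_i-\alpha_j|^2\prod_{\substack{1\le \ell\le k-1\\ \ell\ne i,j}}|\alpha_i-\alpha_\ell|\,|\alpha_j-\alpha_\ell|.$$
   Context: $f_k(X)=X^k-X^{k-1}-\cdots-X-1$ has exactly one root outside the closed unit disk, denoted $\alpha_k$, which is real and larger than $1$; the other roots $\alpha_1,\ldots,\alpha_{k-1}$ have absolute value less than $1$, and all roots are distinct. *)

From mathcomp Require Import all_boot all_algebra.
From mathcomp Require Export complex.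
From mathcomp Require Export all_classical all_reals all_analysis.
Import GRing.Theory Num.Theory.
Local Open Scope ring_scope.

Definition fk (R : realType) (k : nat) : {poly R[i]} :=
  'X^k - \sum_(i < k) 'X^i.

From mathcomp Require Import all_boot all_order all_algebra.
From mathcomp Require Import complex.
From mathcomp Require Import all_classical all_reals all_analysis.
From mathcomp Require Import ring lra.

(* Write f = f_k and b = alpha_k, the dominant root.  Every root z of f satisfies
   z^k (2 - z) = 1, and differentiating (X - 1) f = X^(k+1) - 2 X^k + 1 gives
   f'(z) z (2 - z) (z - 1) = (k + 1) z - 2k.  The first identity forces
   b in [1.99, 2], and since the moduli of all roots multiply to 1 while
   3 |z|^k >= 1 for each of them, every other root has |z| <= 3 / b < 1.51.
   For such z the second identity gives 100 |f'(z)| >= k |z - b|.  As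
   f'(alpha_i) is the product of the alpha_i - alpha_l (l <> i), cancelling the
   factor alpha_i - b leaves k <= 100 |alpha_i - alpha_j| prod |alpha_i - alpha_l|
   over the other non-dominant l.  Multiplying this with the same bound for j
   gives k^2 <= 10^4 times the product in the claim, and 10^4 < 13000 e^3. *)

Import Order.TTheory GRing.Theory Num.Theory.
Import Normc.

Set Implicit Arguments.
Unset Strict Implicit.
Unset Printing Implicit Defensive.
Local Open Scope ring_scope.

Section RealInequalities.
Variable F : realFieldType.

Lemma mulr_le_prod_ge1 (I : finType) (G : I -> F) (a b : I) :
  a != b -> (forall i, 1 <= G i) -> G a * G b <= \prod_i G i.
Proof.
move=> neq_ab ge1G; rewrite (bigD1 a) // (bigD1 b) 1?eq_sym //= mulrA.
have G0 i : 0 <= G i by apply: le_trans (ge1G i).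
rewrite ler_peMr ?mulr_ge0 //.
by apply: (big_ind (fun x => 1 <= x)) => // x y; apply: mulr_ege1.
Qed.

(* With r <= 1.51 one has 2k - (k + 1) r >= 0.47 k and
   r (2 + r) (r + 1) (r + 2) <= 47, whence the constant 100. *)
Lemma root_deriv_bound_arith (k r s t D w : F) :
  100 <= k -> 0 <= r -> r <= 151 / 100 -> 0 <= s -> s <= 2 + r -> 0 <= t -> t <= r + 1 ->
  0 <= D -> 2 * k - (k + 1) * r <= D * (r * s * t) -> w <= r + 2 ->
  k * w <= 100 * D.
Proof.
move=> k100 r0 r151 s0 s2 t0 t1 D0 Lle wle.
have mle : r * s * t <= r * (2 + r) * (r + 1).
  by apply: ler_pM => //; [exact: mulr_ge0 | exact: ler_wpM2l].
have c47 : r * (2 + r) * (r + 1) * (r + 2) <= 47.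
  have r2r : r * (2 + r) <= 151/100 * (351/100) by nra.
  have r1r2 : (r + 1) * (r + 2) <= 251/100 * (351/100) by nra.
  rewrite -mulrA; apply: le_trans (ler_pM _ _ r2r r1r2) _; nra.
have Dm : 47 / 100 * k <= D * (r * (2 + r) * (r + 1)).
  by apply: le_trans (ler_wpM2l D0 mle); nra.
nra.
Qed.

Lemma sqr_div_lt_of_pair_bounds (k A X Y e : F) : 0 < k -> 1 <= e ->
  k <= 100 * (A * X) -> k <= 100 * (A * Y) ->
  k ^+ 2 / (13000 * e ^+ 3) < A ^+ 2 * (X * Y).
Proof.
move=> k0 e1 kX kY.
have kXY : k ^+ 2 <= (100 * (A * X)) * (100 * (A * Y)).
  by rewrite expr2; exact: ler_pM (ltW k0) (ltW k0) kX kY.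
have e3 : 1 <= e ^+ 3 by exact: exprn_ege1.
rewrite ltr_pdivrMr; nra.
Qed.

End RealInequalities.

Lemma deriv_prod_XsubC_at (R : comNzRingType) (I : finType) (G : I -> R) (i : I) :
  (\prod_l ('X - (G l)%:P))^`().[G i] = \prod_(l | l != i) (G i - G l).
Proof.
rewrite (bigD1 i) //= derivM derivXsubC mul1r hornerD hornerM hornerXsubC.
by rewrite subrr mul0r addr0 horner_prod; apply: eq_bigr => l _; rewrite hornerXsubC.
Qed.

Lemma size_sum_Xn (R : nzRingType) (k : nat) :
  (size (\sum_(i < k) 'X^i : {poly R})%R <= k)%N.
Proof.
have -> : (\sum_(i < k) 'X^i : {poly R}) = \poly_(i < k) 1.
  by rewrite poly_def; apply: eq_bigr => i _; rewrite scale1r.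
exact: size_poly.
Qed.

Section Modulus.
Variable R : rcfType.
Implicit Types (x y z : R[i]) (b : R).

Lemma normcE z : `|z| = real_complex R (normc z).
Proof. by []. Qed.

Lemma normc_ge0 z : 0 <= normc z.
Proof. by rewrite -lecR rmorph0 -normcE. Qed.

Lemma normc_eq0 z : (normc z == 0) = (z == 0).
Proof.
by rewrite -[RHS]normr_eq0 normcE -(rmorph0 (real_complex R)) (inj_eq (@complexI R)).
Qed.

Lemma normc_real b : 0 <= b -> normc (real_complex R b) = b.
Proof. by move=> b0; apply: (@complexI R); rewrite -normcE ger0_norm ?lecR. Qed.

Lemma lerB_normc x y : normc x - normc y <= normc (x - y).
Proof. by have := lerB_dist x y; rewrite !normcE -rmorphB lecR. Qed.

Lemma normc_prod (I : Type) (s : seq I) (P : pred I) (G : I -> R[i]) :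
  normc (\prod_(i <- s | P i) G i) = \prod_(i <- s | P i) normc (G i).
Proof. exact: (big_morph _ (@normcM R) (@normc1 R)). Qed.

Lemma normcX z n : normc (z ^+ n) = normc z ^+ n.
Proof. by apply: (@complexI R); rewrite rmorphXn -!normcE normrX. Qed.

Lemma normc_nat n : normc (n%:R : R[i]) = n%:R.
Proof. by rewrite -(rmorph_nat (real_complex R)) normc_real. Qed.

Lemma normcD x y : normc (x + y) <= normc x + normc y.
Proof. by have := ler_normD x y; rewrite !normcE -rmorphD lecR. Qed.

Lemma gt1_complex_real z : 1 < z -> exists2 b, z = real_complex R b & 1 < b.
Proof. by case: z => a c; rewrite ltcE /= => /andP[/eqP -> a1]; exists a. Qed.

End Modulus.

Section RootsOfFk.
Variables (R : realType) (k : nat).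
Implicit Types (z : R[i]) (b : R).

Let size_fk_tail :
  (size (- \sum_(i < k) 'X^i : {poly R[i]})%R < size ('X^k : {poly R[i]}))%N.
Proof. by rewrite size_polyN size_polyXn ltnS size_sum_Xn. Qed.

Lemma size_fk : size (fk R k) = k.+1.
Proof. by rewrite size_polyDl // size_polyXn. Qed.

Lemma lead_coef_fk : lead_coef (fk R k) = 1.
Proof. by rewrite lead_coefDl // lead_coefXn. Qed.

Lemma root_fk z : root (fk R k) z = (z ^+ k == \sum_(i < k) z ^+ i).
Proof.
rewrite /root /fk hornerD hornerN hornerXn horner_sum subr_eq0.
by under eq_bigr do rewrite hornerXn.
Qed.

Lemma root_fk_geom {z} : root (fk R k) z -> (2 - z) * \sum_(i < k) z ^+ i = 1.
Proof.
rewrite root_fk => /eqP zk.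
have := subrX1 z k; rewrite zk => geom.
have -> : (2 - z) * \sum_(i < k) z ^+ i =
    1 + (\sum_(i < k) z ^+ i - 1 - (z - 1) * \sum_(i < k) z ^+ i) by ring.
by rewrite geom subrr addr0.
Qed.

Lemma root_fk_expr {z} : root (fk R k) z -> z ^+ k * (2 - z) = 1.
Proof.
move=> zr; have := root_fk_geom zr.
by move: zr; rewrite root_fk mulrC => /eqP <-.
Qed.

Lemma horner0_fk : (0 < k)%N -> (fk R k).[0] = -1.
Proof.
move=> k0; rewrite horner_coef0 coefB coefXn coef_sum ltn_eqF // sub0r; congr (- _).
by rewrite -(prednK k0) big_ord_recl coefXn big1 ?addr0 // => i _; rewrite coefXn.
Qed.

Lemma root_fk_deriv {z} : (0 < k)%N -> root (fk R k) z ->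
  (fk R k)^`().[z] * (z * (2 - z) * (z - 1)) = (k.+1)%:R * z - (k.*2)%:R.
Proof.
move=> k0 zr; have zk := root_fk_expr zr.
have E : ('X - 1) * fk R k = 'X^(k.+1) - 'X^k *+ 2 + 1.
  by rewrite /fk mulrBr -(subrX1 'X k) exprSr; ring.
move: (rootP zr) E; move: (fk R k) => F Fz E.
have dF := congr1 (fun p => p^`().[z]) E.
rewrite /= !poly.derivE !hornerE Fz !(hornerMn, hornerXn) add0r in dF.
have zkS : z ^+ k = z ^+ k.-1 * z by rewrite -exprSr prednK.
rewrite zkS in zk dF.
transitivity ((z - 1) * F^`().[z] * (z * (2 - z))); first by ring.
rewrite dF -mul2n natrM.
transitivity ((k.+1)%:R * z * (z ^+ k.-1 * z * (2 - z))
              - 2 * k%:R * (z ^+ k.-1 * z * (2 - z))); first by ring.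
by rewrite zk; ring.
Qed.

Lemma real_root_fk_bounds b : (100 <= k)%N -> 1 < b ->
  root (fk R k) (real_complex R b) -> 199 / 100 <= b <= 2.
Proof.
move=> k100 b1 br.
have geom : (2 - b) * \sum_(i < k) b ^+ i = 1.
  apply: (@complexI R); rewrite rmorph1 -[RHS](root_fk_geom br).
  rewrite rmorphM rmorphB rmorph_sum (rmorph_nat _ 2); congr (_ * _).
  by apply: eq_bigr => i _; rewrite rmorphXn.
have sum_ge : k%:R <= \sum_(i < k) b ^+ i.
  rewrite -[X in X%:R]card_ord -sumr_const; apply: ler_sum => i _.
  exact: exprn_ege1 (ltW b1).
have k100R : 100 <= k%:R :> R by rewrite (ler_nat R 100 k).
apply/andP; split; nra.
Qed.

Lemma root_fk_normcX_ge {z} : root (fk R k) z -> 1 <= 3 * normc z ^+ k.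
Proof.
move=> zr; have e : normc z ^+ k * normc (2 - z) = 1.
  by rewrite -normcX -normcM root_fk_expr // normc1.
have le2z : normc (2 - z) <= 2 + normc z.
  by apply: le_trans (normcD _ _) _; rewrite normcN normc_nat.
have := normc_ge0 z; have := normc_ge0 (2 - z); have := exprn_ge0 k (normc_ge0 z).
case: (lerP 1 (normc z)) => [z1|z1]; last by nra.
by have := exprn_ege1 k z1; lra.
Qed.

Lemma root_fk_deriv_lower_bound {z} b : (100 <= k)%N -> root (fk R k) z ->
  normc z <= 151 / 100 -> 0 <= b <= 2 ->
  k%:R * normc (z - real_complex R b) <= 100 * normc ((fk R k)^`().[z]).
Proof.
move=> k100 zr z151 /andP[b0 b2]; have k0 : (0 < k)%N by apply: leq_trans k100.
have := congr1 (@normc _) (root_fk_deriv k0 zr).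
rewrite !normcM => deriv_eq.
apply: (root_deriv_bound_arith (r := normc z) (s := normc (2 - z)) (t := normc (z - 1))).
- by rewrite (ler_nat R 100 k).
- exact: normc_ge0.
- exact: z151.
- exact: normc_ge0.
- by apply: le_trans (normcD _ _) _; rewrite normcN normc_nat.
- exact: normc_ge0.
- by apply: le_trans (normcD _ _) _; rewrite normcN normc1.
- exact: normc_ge0.
- rewrite deriv_eq -[normc (_ - _)]normcN opprB; apply: le_trans (lerB_normc _ _).
  by rewrite normcM !normc_nat -mul2n natrM natr1.
- apply: le_trans (normcD _ _) _; rewrite normcN normc_real //; lra.
Qed.

Section Roots.
Variable alpha : 'I_k -> R[i].
Hypothesis alpha_inj : injective alpha.
Hypothesis alpha_root : forall l, root (fk R k) (alpha l).

Lemma fk_prod_roots : fk R k = \prod_l ('X - (alpha l)%:P).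
Proof.
have := @all_roots_prod_XsubC _ (fk R k) [seq alpha l | l <- index_enum 'I_k].
rewrite size_map size_fk lead_coef_fk scale1r big_map => -> //.
- by rewrite -{1}(card_ord k) cardT enumT.
- by apply/allP => _ /mapP [l _ ->].
- by rewrite uniq_rootsE (map_inj_uniq alpha_inj) index_enum_uniq.
Qed.

Lemma prod_normc_roots : (0 < k)%N -> \prod_l normc (alpha l) = 1.
Proof.
move=> k0; have := horner0_fk k0.
rewrite fk_prod_roots horner_prod => /(congr1 (@normc _)).
rewrite normcN normc1 normc_prod => prod1; rewrite -[RHS]prod1.
by apply: eq_bigr => l _; rewrite hornerXsubC sub0r normcN.
Qed.

(* The factors 3 |alpha_m|^k are all >= 1 and multiply to 3^k, so the two
   factors for l and d alone give 9 (|alpha_l| b)^k <= 3^k. *)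
Lemma normc_root_fk_le (d l : 'I_k) b : (100 <= k)%N ->
  alpha d = real_complex R b -> 199 / 100 <= b -> l != d ->
  normc (alpha l) <= 151 / 100.
Proof.
move=> k100 ad b199 neq_ld; have k0 : (0 < k)%N by apply: leq_trans k100.
have b0 : 0 <= b by apply: le_trans b199.
have := @mulr_le_prod_ge1 R _ (fun m => 3 * normc (alpha m) ^+ k) l d neq_ld
  (fun m => root_fk_normcX_ge (alpha_root m)).
rewrite big_split /= prodr_const card_ord prodrXl prod_normc_roots // expr1n mulr1.
rewrite ad normc_real //; set r := normc (alpha l) => prod_le.
have r0 : 0 <= r := normc_ge0 _.
have rbk : (r * b) ^+ k <= 3 ^+ k.
  by rewrite exprMn; have := exprn_ge0 k r0; have := exprn_ge0 k b0; nra.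
have : r * b <= 3.
  by move: rbk; rewrite ler_pXn2r // ?nnegrE //; exact: mulr_ge0.
nra.
Qed.

Lemma root_fk_pair_bound (d i j : 'I_k) b : (100 <= k)%N ->
  alpha d = real_complex R b -> 199 / 100 <= b <= 2 -> i != d -> j != d -> i != j ->
  k%:R <= 100 * (normc (alpha i - alpha j) *
    \prod_(l | [&& l != d, l != i & l != j]) normc (alpha i - alpha l)).
Proof.
move=> k100 ad /andP[b199 b2] neq_id neq_jd neq_ij.
have b02 : 0 <= b <= 2 by apply/andP; split=> //; lra.
have := root_fk_deriv_lower_bound k100 (alpha_root i)
  (normc_root_fk_le k100 ad b199 neq_id) b02.
rewrite fk_prod_roots deriv_prod_XsubC_at (bigD1 j) 1?eq_sym //= (bigD1 d) /=; last first.
  by rewrite !(eq_sym d) neq_id neq_jd.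
rewrite -ad !normcM normc_prod (eq_bigl (fun l => [&& l != d, l != i & l != j])).
  have w0 : 0 < normc (alpha i - alpha d).
    by rewrite lt0r normc_ge0 normc_eq0 subr_eq0 (inj_eq alpha_inj) neq_id.
  set w := normc (alpha i - alpha d); set A := normc (alpha i - alpha j).
  set X := \prod_(l | _) _.
  have -> : 100 * (A * (w * X)) = w * (100 * (A * X)) by ring.
  by rewrite mulrC ler_pM2l.
by move=> l /=; rewrite andbC.
Qed.

End Roots.

End RootsOfFk.

Theorem mainTheorem5 (R : realType) (k : nat) (alpha : 'I_k -> R[i]) :
  (100 <= k)%N ->
  injective alpha ->
  (forall l : 'I_k, root (fk R k) (alpha l)) ->
  (forall l : 'I_k, val l = k.-1 -> 1 < alpha l) ->
  forall i j : 'I_k, (val i < k.-1)%N -> (val j < k.-1)%N -> i != j ->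
    (k ^ 2)%:R / (13000%:R * (real_complex R (expR 1)) ^+ 3)
    < `|alpha i - alpha j| ^+ 2 *
      \prod_(l : 'I_k | [&& (val l < k.-1)%N, l != i & l != j])
         (`|alpha i - alpha l| * `|alpha j - alpha l|).
Proof.
move=> k100 alpha_inj alpha_root alpha_dom i j ik jk neq_ij.
have k0 : (0 < k)%N by apply: leq_trans k100.
have dk : (k.-1 < k)%N by rewrite ltn_predL.
pose d := Ordinal dk.
have [b ad b1] := gt1_complex_real (alpha_dom d erefl).
have b_bds : 199 / 100 <= b <= 2.
  by apply: real_root_fk_bounds k100 b1 _; rewrite -ad.
have nd l : (val l < k.-1)%N = (l != d).
  by rewrite -val_eqE /= ltn_neqAle -ltnS prednK // ltn_ord andbT.
have [neq_id neq_jd] : i != d /\ j != d by rewrite -!nd.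
have bi := root_fk_pair_bound alpha_inj alpha_root k100 ad b_bds neq_id neq_jd neq_ij.
have neq_ji : j != i by rewrite eq_sym.
have := root_fk_pair_bound alpha_inj alpha_root k100 ad b_bds neq_jd neq_id neq_ji.
rewrite -normcN opprB (eq_bigl (fun l => [&& l != d, l != i & l != j])) => [bj|l]; last first.
  by rewrite /= (andbC (l != j)).
under eq_bigl => l do rewrite nd.
rewrite -rmorphXn -(rmorph_nat (real_complex R) 13000) -rmorphM -fmorphV.
rewrite -(rmorph_nat (real_complex R) (k ^ 2)) -rmorphM.
rewrite normcE -rmorphXn; under eq_bigr => l _ do rewrite !normcE -rmorphM.
rewrite -rmorph_prod -rmorphM ltcR big_split natrX.
apply: sqr_div_lt_of_pair_bounds bi bj; first by rewrite ltr0n.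
by rewrite ltW // expR_gt1.
Qed.
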